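(* Let $d\geq 3$ be an integer and let $\rho_d^{(w)}=\frac{d+1}{d^3}I_{\mathbb{C}^d\otimes\mathbb{C}^d}-\frac{1}{d^2}V_d$ be the Werner state on $\mathbb{C}^d\otimes\mathbb{C}^d$, where $V_d$ is the flip operator, $V_d(\psi_1\otimes\psi_2)=\psi_2\otimes\psi_1$. Then for any three self-adjoint operators $J^{(a)},J^{(b_1)},J^{(b_2)}$ on $\mathbb{C}^d$ with operator norms $\|J^{(a)}\|,\|J^{(b_1)}\|,\|J^{(b_2)}\|\leq 1$, $$\Big|\,\mathrm{tr}\big[\rho_d^{(w)}(J^{(a)}\otimes J^{(b_1)})\big]-\mathrm{tr}\big[\rho_d^{(w)}(J^{(a)}\otimes J^{(b_2)})\big]\,\Big|\leq 1-\mathrm{tr}\big[\rho_d^{(w)}(J^{(b_1)}\otimes J^{(b_2)})\big].$$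
   Context: This is the perfect correlation form of the original Bell inequality for the Werner state; no assumption of perfect correlation $\mathrm{tr}[\rho_d^{(w)}(J^{(b_1)}\otimes J^{(b_1)})]=1$ is made. *)

(* Complex scalars: an arbitrary numClosedFieldType C
   (e.g. algC, or R[i] for a real type R, i.e. the usual complex numbers). *)
From HB Require Import structures.
From mathcomp Require Import all_boot all_order all_algebra.
From mathcomp Require Export mxtens.
Set Implicit Arguments. Unset Strict Implicit. Unset Printing Implicit Defensive.
Import Order.TTheory GRing.Theory Num.Theory.
Local Open Scope ring_scope.

(* C^d (x) C^d is identified with C^(d*d) via mxtens_index (i,j) = i*d + j,
   and J (x) K is the Kronecker product J *t K (mxtens). *)

Definition adjmx {C : numClosedFieldType} {m n : nat} (A : 'M[C]_(m, n)) : 'M[C]_(n, m) :=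
  \matrix_(i, j) (A j i)^*.

Definition selfadjoint {C : numClosedFieldType} {n : nat} (A : 'M[C]_n) : Prop :=
  adjmx A = A.

Definition vnorm2 {C : numClosedFieldType} {n : nat} (v : 'cV[C]_n) : C :=
  \sum_i `|v i 0| ^+ 2.

Definition opnorm_le1 {C : numClosedFieldType} {n : nat} (A : 'M[C]_n) : Prop :=
  forall v : 'cV[C]_n, vnorm2 (A *m v) <= vnorm2 v.

Definition flipmx {C : numClosedFieldType} (d : nat) : 'M[C]_(d * d) :=
  \matrix_(k, l) ((((mxtens_unindex k).1 == (mxtens_unindex l).2) &&
                   ((mxtens_unindex k).2 == (mxtens_unindex l).1))%:R : C).

Definition werner {C : numClosedFieldType} (d : nat) : 'M[C]_(d * d) :=
  ((d + 1)%:R / (d%:R ^+ 3)) *: 1%:M - (d%:R ^+ 2)^-1 *: flipmx d.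

Lemma flipmx_tens (C : numClosedFieldType) d (u v : 'cV[C]_d) :
  flipmx d *m (u *t v) = v *t u.
Proof.
apply/matrixP=> k z.
rewrite -[k]mxtens_unindexK -[z]mxtens_unindexK.
case: (mxtens_unindex k) => i j; case: (mxtens_unindex z) => p q.
rewrite tensmxE !mxE.
rewrite (bigD1 (mxtens_index (j, i))) //=.
rewrite big1 ?addr0; last first.
  move=> l; rewrite -[l]mxtens_unindexK; case: (mxtens_unindex l) => a b.
  rewrite /flipmx tensmxE mxE !mxtens_indexK /=.
  rewrite (inj_eq (can_inj (@mxtens_indexK d d))) xpair_eqE negb_and => hne.
  rewrite (eq_sym i b) (eq_sym j a).
  by case/orP: hne => /negbTE h; rewrite h ?andbF mul0r.
rewrite /flipmx tensmxE mxE !mxtens_indexK /= !eqxx mul1r mulrC.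
by rewrite (ord1 p) (ord1 q).
Qed.

(* Write [c(X, Y) = tr[rho (X (x) Y)] = (d+1)/d^3 tr X tr Y - tr(XY)/d^2].  Replacing
   one observable by its negative, both halves of the claim follow from the symmetric
   inequality [c(X, Y) + c(Y, Z) + c(Z, X) >= -1] for self-adjoint contractions.  In
   each argument, say [X], the left side is [tr(X M) + const] with [M] self-adjoint, and
   [tr(X M)] is minimised over contractions by a reflection: diagonalise [X] and replace
   each eigenvalue by -1 or 1 according to the sign of the matching diagonal entry of
   [M].  A reflection with [p] eigenvalues -1 has trace [d - 2p], and
   [tr(XY) <= d - 2|p - q|] since [(1 - X)(1 + Y)] has nonnegative trace.  What remains
   is an inequality between integer polynomials in [p, q, r] in [0, d], which holds for
   [d >= 3] (and fails for [d = 2] at [p = q = r = 1]). *)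

From HB Require Import structures.
From mathcomp Require Import all_boot all_order all_algebra.
From mathcomp Require Import mxtens ring zify.
Set Implicit Arguments. Unset Strict Implicit. Unset Printing Implicit Defensive.
Import Order.TTheory GRing.Theory Num.Theory.
Local Open Scope ring_scope.

Lemma affine_ge0 {R : numDomainType} (u v x y t : R) :
  x <= t <= y -> 0 <= u + v * x -> 0 <= u + v * y -> 0 <= u + v * t.
Proof.
case/andP=> le_xt le_ty fx_ge0 fy_ge0.
have [eq_yx|neq_yx] := eqVneq y x.
  by have -> : t = x by apply/le_anti; rewrite le_xt -eq_yx le_ty.
have y_x_gt0 : 0 < y - x by rewrite lt_def subr_eq0 neq_yx subr_ge0 (le_trans le_xt).
rewrite -(pmulr_rge0 _ y_x_gt0).
have -> : (y - x) * (u + v * t) = (y - t) * (u + v * x) + (t - x) * (u + v * y) by ring.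
by rewrite addr_ge0 // mulr_ge0 // subr_ge0.
Qed.

Section BellPolynomial.
Variable n : int.
Hypothesis n_ge3 : 3 <= n.

Definition sorted_bell_poly (a b c : int) :=
  n ^+ 3 - n ^+ 2 * (a + b + c) + (n + 1) * (a * b + b * c + c * a) - n * (2 * a + b).

(* [12 (n+1) * sorted_bell_poly b b b = (6 (n+1) b - 3 n (n+1))^2 + 3 n^2 (n+1) (n-3)];
   this is where [n >= 3] is needed. *)
Lemma sorted_bell_poly_diag_ge0 b : 0 <= sorted_bell_poly b b b.
Proof.
have : 0 <= (6 * (n + 1) * b - 3 * n * (n + 1)) ^+ 2 + 3 * n ^+ 2 * (n + 1) * (n - 3).
  by nia.
rewrite /sorted_bell_poly; nia.
Qed.

Lemma sorted_bell_poly_ge0_at0 b : 0 <= b <= n -> 0 <= sorted_bell_poly 0 b b.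
Proof.
move=> /andP[b_ge0 b_le].
have -> : sorted_bell_poly 0 b b = (n - b) * (n ^+ 2 - (n + 1) * b).
  by rewrite /sorted_bell_poly; ring.
have [->|b_ltn] := eqVneq b n; first by rewrite subrr mul0r.
apply: mulr_ge0; nia.
Qed.

Lemma sorted_bell_poly_ge0_atn a b : 0 <= a <= b -> 0 <= sorted_bell_poly a b n.
Proof.
move=> hab; have -> : sorted_bell_poly a b n = a * ((n + 1) * b - n).
  by rewrite /sorted_bell_poly; ring.
have [->|a_neq0] := eqVneq a 0; first by rewrite mul0r.
(* integrality: [a > 0] forces [b >= 1] *)
apply: mulr_ge0; nia.
Qed.

Lemma sorted_bell_poly_ge0 a b c : 0 <= a <= b -> b <= c <= n ->
  0 <= sorted_bell_poly a b c.
Proof.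
move=> hab hbc.
have E c' : sorted_bell_poly a b c' =
    (n ^+ 3 - n ^+ 2 * (a + b) + (n + 1) * a * b - n * (2 * a + b))
    + ((n + 1) * (a + b) - n ^+ 2) * c'.
  by rewrite /sorted_bell_poly; ring.
rewrite E; apply: (affine_ge0 (x := b) (y := n)) => //; rewrite -E; last first.
  exact: sorted_bell_poly_ge0_atn.
have E' a' : sorted_bell_poly a' b b =
    (n ^+ 3 - 2 * n ^+ 2 * b + (n + 1) * b ^+ 2 - n * b)
    + (2 * (n + 1) * b - n ^+ 2 - 2 * n) * a'.
  by rewrite /sorted_bell_poly; ring.
rewrite E'; apply: (affine_ge0 (x := 0) (y := b)) => //; rewrite -E'.
  by apply: sorted_bell_poly_ge0_at0; lia.
exact: sorted_bell_poly_diag_ge0.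
Qed.

End BellPolynomial.

Definition bell_poly {R : pzRingType} (n p q r : nat) : R :=
  n%:R ^+ 3 - n%:R ^+ 2 * (p + q + r)%:R + (n + 1)%:R * (p * q + q * r + r * p)%:R
  - n%:R * (minn p q + minn q r + minn r p)%:R.

Lemma bell_polyC12 {R : pzRingType} n p q r : bell_poly n p q r = bell_poly n q p r :> R.
Proof. by rewrite /bell_poly; congr (_ - _ * _%:R + _ * _%:R - _ * _%:R); lia. Qed.

Lemma bell_polyC23 {R : pzRingType} n p q r : bell_poly n p q r = bell_poly n p r q :> R.
Proof. by rewrite /bell_poly; congr (_ - _ * _%:R + _ * _%:R - _ * _%:R); lia. Qed.

Lemma bell_poly_int_ge0 (n p q r : nat) : (3 <= n)%N ->
  (p <= n)%N -> (q <= n)%N -> (r <= n)%N -> 0 <= bell_poly n p q r :> int.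
Proof.
move=> n_ge3; wlog le_pq : p q r / (p <= q)%N.
  move=> sorted; case: (leqP p q) => [|/ltnW] h; first exact: sorted.
  by rewrite bell_polyC12 => hp hq hr; apply: sorted.
wlog le_pr : p q r le_pq / (p <= r)%N.
  move=> sorted; case: (leqP p r) => [|/ltnW] h; first exact: sorted.
  rewrite bell_polyC12 bell_polyC23 bell_polyC12 => hp hq hr.
  by apply: sorted => //; apply: leq_trans h le_pq.
wlog le_qr : q r le_pq le_pr / (q <= r)%N.
  move=> sorted; case: (leqP q r) => [|/ltnW] h; first exact: sorted.
  by rewrite bell_polyC23 => hp hq hr; apply: sorted.
move=> _ _ le_rn.
have -> : bell_poly n p q r = sorted_bell_poly n%:R p%:R q%:R r%:R.
  rewrite /bell_poly /sorted_bell_poly (minn_idPl le_pq) (minn_idPl le_qr) (minn_idPr le_pr).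
  by rewrite !natrD !natrM; ring.
by apply: sorted_bell_poly_ge0; lia.
Qed.

Lemma bell_poly_ge0 {R : numDomainType} (n p q r : nat) : (3 <= n)%N ->
  (p <= n)%N -> (q <= n)%N -> (r <= n)%N -> 0 <= bell_poly n p q r :> R.
Proof.
move=> n_ge3 hp hq hr; have := bell_poly_int_ge0 n_ge3 hp hq hr.
rewrite -(ler0z R) /bell_poly.
by rewrite !(rmorphB, rmorphD, rmorphM, rmorphXn, rmorph_nat).
Qed.

Local Open Scope sesquilinear_scope.

Section Adjoint.
Context {C : numClosedFieldType}.

Lemma adjmxE m n (A : 'M[C]_(m, n)) : adjmx A = A ^t*.
Proof. by apply/matrixP=> i j; rewrite !mxE. Qed.

Lemma selfadjointE n (X : 'M[C]_n) : selfadjoint X = (X ^t* = X).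
Proof. by rewrite /selfadjoint adjmxE. Qed.

Lemma trmxC_mul m n p (A : 'M[C]_(m, n)) (B : 'M[C]_(n, p)) :
  (A *m B) ^t* = B ^t* *m A ^t*.
Proof. by rewrite trmx_mul map_mxM. Qed.

Lemma mxtrace_trmxC n (A : 'M[C]_n) : \tr (A ^t*) = (\tr A)^*.
Proof. by rewrite rmorph_sum; apply: eq_bigr => i _; rewrite !mxE. Qed.

Lemma mxtrace_mul_trmxC_ge0 m n (A : 'M[C]_(m, n)) : 0 <= \tr (A *m A ^t*).
Proof.
apply: sumr_ge0 => i _; rewrite mxE; apply: sumr_ge0 => j _.
by rewrite !mxE mul_conjC_ge0.
Qed.

Variable n : nat.
Implicit Types X Y : 'M[C]_n.

Lemma selfadjoint_scalar (a : C) : a \is Num.real -> selfadjoint (a%:M : 'M_n).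
Proof.
by rewrite selfadjointE => /CrealP a_real; rewrite tr_scalar_mx map_scalar_mx /= a_real.
Qed.

Lemma selfadjointD X Y : selfadjoint X -> selfadjoint Y -> selfadjoint (X + Y).
Proof. by rewrite !selfadjointE linearD map_mxD /= => -> ->. Qed.

Lemma selfadjointN X : selfadjoint X -> selfadjoint (- X).
Proof. by rewrite !selfadjointE linearN map_mxN /= => ->. Qed.

Lemma selfadjointZ (a : C) X : a \is Num.real -> selfadjoint X -> selfadjoint (a *: X).
Proof. by rewrite !selfadjointE linearZ map_mxZ /= => /CrealP-> ->. Qed.

Lemma selfadjoint_mxtrace_real X : selfadjoint X -> \tr X \is Num.real.
Proof. by rewrite selfadjointE CrealE -mxtrace_trmxC => ->. Qed.

Lemma selfadjoint_mxtrace_mul_real X Y : selfadjoint X -> selfadjoint Y ->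
  \tr (X *m Y) \is Num.real.
Proof.
by rewrite !selfadjointE CrealE -mxtrace_trmxC trmxC_mul mxtrace_mulC => -> ->.
Qed.

Lemma selfadjoint_mxtrace_sqr_ge0 X Y : selfadjoint X -> selfadjoint Y ->
  0 <= \tr (X *m X *m (Y *m Y)).
Proof.
rewrite !selfadjointE => hX hY.
have -> : \tr (X *m X *m (Y *m Y)) = \tr (X *m Y *m (X *m Y) ^t*).
  by rewrite trmxC_mul hX hY !mulmxA [RHS]mxtrace_mulC !mulmxA.
exact: mxtrace_mul_trmxC_ge0.
Qed.

End Adjoint.

Section Spectral.
Context {C : numClosedFieldType} {n : nat}.
Implicit Types (X M P : 'M[C]_n) (v : 'cV[C]_n).

Lemma vnorm2Z (a : C) v : vnorm2 (a *: v) = `|a| ^+ 2 * vnorm2 v.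
Proof. by rewrite /vnorm2 mulr_sumr; apply: eq_bigr => i _; rewrite mxE normrM exprMn. Qed.

Lemma vnorm2_gt0 v : v != 0 -> 0 < vnorm2 v.
Proof.
have F_ge0 i : 0 <= `|v i 0| ^+ 2 by rewrite exprn_ge0.
move=> v_neq0; rewrite lt_def /vnorm2 sumr_ge0 ?andbT //.
apply: contra v_neq0 => /eqP/psumr_eq0P v0; apply/eqP/matrixP => i j.
by have /eqP := v0 (fun k _ => F_ge0 k) i isT; rewrite ord1 mxE sqrf_eq0 normr_eq0 => /eqP.
Qed.

Lemma opnorm_le1N X : opnorm_le1 X -> opnorm_le1 (- X).
Proof. by move=> nX v; rewrite mulNmx -scaleN1r vnorm2Z normrN1 expr1n mul1r. Qed.

Lemma opnorm_le1_eigenvalue X v (a : C) : opnorm_le1 X ->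
  X *m v = a *: v -> v != 0 -> `|a| <= 1.
Proof.
move=> nX Xv v_neq0; have := nX v; rewrite Xv vnorm2Z -[X in _ <= X]mul1r.
by rewrite ler_pM2r ?vnorm2_gt0 // expr_le1.
Qed.

Lemma mul_trmxC_unitarymx P : P \is unitarymx -> P ^t* *m P = 1%:M.
Proof. by rewrite -trmxC_unitary => /unitarymxP; rewrite trmxCK. Qed.

Lemma selfadjoint_spectral X : selfadjoint X ->
  exists2 P, P \is unitarymx &
    exists2 D : 'rV[C]_n, D \is a realmx & X = P ^t* *m diag_mx D *m P.
Proof.
move=> hX; have X_herm : X \is hermsymmx.
  by apply/is_hermitianmxP; rewrite expr0 scale1r; move: hX; rewrite selfadjointE => ->.
exists (spectralmx X); first exact: spectral_unitarymx.
exists (spectral_diag X); first exact: hermitian_spectral_diag_real.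
rewrite -invmx_unitary ?spectral_unitarymx //.
exact/orthomx_spectralP/hermitian_normalmx.
Qed.

Lemma unitary_conj_diag_eigenvector P (D : 'rV[C]_n) i : P \is unitarymx ->
  exists2 v : 'cV[C]_n, v != 0 & P ^t* *m diag_mx D *m P *m v = D 0 i *: v.
Proof.
move=> Pu; exists (P ^t* *m delta_mx i (0 : 'I_1)).
  apply: contraTneq isT => v0.
  have /matrixP/(_ i 0) : P *m (P ^t* *m delta_mx i 0) = delta_mx i 0 :> 'cV_n.
    by rewrite mulmxA (unitarymxP Pu) mul1mx.
  by rewrite v0 mulmx0 !mxE !eqxx => /eqP; rewrite eq_sym oner_eq0.
rewrite -!mulmxA [P *m (_ *m _)]mulmxA (unitarymxP Pu) mul1mx scalemxAr.
congr (_ *m _); apply/matrixP=> j k.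
by rewrite mul_diag_mx !mxE; case: eqP => [->|]; rewrite ?mulr1 ?mulr0.
Qed.

Definition reflection X := selfadjoint X /\ X *m X = 1%:M.

Lemma reflection_unitary_conj_sign P (b : 'I_n -> bool) : P \is unitarymx ->
  reflection (P ^t* *m diag_mx (\row_i (-1) ^+ b i) *m P).
Proof.
move=> Pu; set E := \row_i ((-1) ^+ b i : C).
have E_real : E \is a realmx by apply/mxOverP => i j; rewrite mxE rpred_sign.
have E2 : \row_j (E 0 j * E 0 j) = const_mx 1.
  by apply/rowP => j; rewrite !mxE -expr2 sqrr_sign.
split.
  by rewrite selfadjointE !trmxC_mul trmxCK tr_diag_mx map_diag_mx (realmxC E_real) mulmxA.
rewrite -!mulmxA [P *m (_ *m _)]mulmxA (unitarymxP Pu) mul1mx.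
rewrite [diag_mx _ *m (_ *m P)]mulmxA mulmx_diag E2 diag_const_mx mul1mx.
exact: mul_trmxC_unitarymx.
Qed.

Lemma mxtrace_conj_diag_mul P Q M (D : 'rV[C]_n) :
  \tr (P *m diag_mx D *m Q *m M) = \sum_i D 0 i * (Q *m M *m P) i i.
Proof.
rewrite -!mulmxA mxtrace_mulC -mulmxA mul_diag_mx.
by rewrite /mxtrace; apply: eq_bigr => i _; rewrite mxE !mulmxA.
Qed.

Lemma reflection_mxtrace X : reflection X ->
  exists2 p, (p <= n)%N & \tr X = n%:R - 2 * p%:R.
Proof.
case=> hX XX; have [P Pu [D _ XE]] := selfadjoint_spectral hX.
have D_sign i : D 0 i = (-1) ^+ (D 0 i < 0)%R.
  have [v v_neq0] := unitary_conj_diag_eigenvector D i Pu; rewrite -XE => Xv.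
  have : (D 0 i ^+ 2 - 1) *: v = 0.
    by rewrite scalerBl scale1r expr2 -scalerA -Xv scalemxAr -Xv mulmxA XX mul1mx subrr.
  move/eqP; rewrite scaler_eq0 (negbTE v_neq0) orbF subr_eq0 sqrf_eq1.
  by case/orP => /eqP->; rewrite ?ltr10 ?oppr_lt0 ?ltr01.
exists (\sum_i ((D 0 i < 0)%R : nat))%N.
  rewrite -[X in (_ <= X)%N]card_ord -sum1_card; apply: leq_sum => i _; exact: leq_b1.
rewrite XE mxtrace_mulC mulmxA (unitarymxP Pu) mul1mx mxtrace_diag natr_sum mulr_sumr.
rewrite -[n in n%:R]card_ord -sumr_const -sumrB; apply: eq_bigr => i _.
by rewrite {1}D_sign; case: (D 0 i < 0)%R => /=; ring.
Qed.

Lemma reflectionN X : reflection X -> reflection (- X).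
Proof. by case=> hX XX; split; [exact: selfadjointN | rewrite mulmxN mulNmx opprK]. Qed.

Lemma reflection_add1_sqr X : reflection X ->
  (1%:M + X) *m (1%:M + X) = 2%:R *: (1%:M + X).
Proof.
case=> _ XX; rewrite mulmxDl !mulmxDr !mul1mx mulmx1 XX scaler_nat mulr2n.
by rewrite [X + 1%:M]addrC.
Qed.

(* [1 - X] and [1 + Y] are twice orthogonal projections, so [tr((1 - X)(1 + Y)) >= 0]. *)
Lemma reflection_mxtrace_mul_le X Y : reflection X -> reflection Y ->
  \tr (X *m Y) <= n%:R - \tr X + \tr Y.
Proof.
move=> rX rY; have rNX := reflectionN rX.
have sa1 : selfadjoint (1%:M : 'M[C]_n) by apply: selfadjoint_scalar; exact: real1.
have trPQ : \tr ((1%:M - X) *m (1%:M + Y)) = n%:R - \tr X + \tr Y - \tr (X *m Y).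
  rewrite mulmxDl !mulmxDr !mul1mx mulmx1 mulNmx !mxtraceD !raddfN /= mxtrace1.
  ring.
rewrite -subr_ge0 -trPQ.
have := selfadjoint_mxtrace_sqr_ge0 (selfadjointD sa1 rNX.1) (selfadjointD sa1 rY.1).
rewrite (reflection_add1_sqr rNX) (reflection_add1_sqr rY) -scalemxAl -scalemxAr.
by rewrite !mxtraceZ mulrA pmulr_rge0 ?mulr_gt0 ?ltr0n.
Qed.

Lemma reflection_mxtrace_mul_le_min X Y p q : reflection X -> reflection Y ->
  \tr X = n%:R - 2 * p%:R -> \tr Y = n%:R - 2 * q%:R ->
  \tr (X *m Y) <= n%:R - 2 * p%:R - 2 * q%:R + 4 * (minn p q)%:R.
Proof.
move=> rX rY trX trY; case: leqP => _.
  have -> : n%:R - 2 * p%:R - 2 * q%:R + 4 * p%:R = n%:R - \tr X + \tr Y :> C.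
    by rewrite trX trY; ring.
  exact: reflection_mxtrace_mul_le.
have -> : n%:R - 2 * p%:R - 2 * q%:R + 4 * q%:R = n%:R - \tr Y + \tr X :> C.
  by rewrite trX trY; ring.
by rewrite mxtrace_mulC; exact: reflection_mxtrace_mul_le.
Qed.

Lemma contraction_reflection_mxtrace_le X M :
  selfadjoint X -> opnorm_le1 X -> selfadjoint M ->
  exists2 R, reflection R & \tr (R *m M) <= \tr (X *m M).
Proof.
move=> hX nX; rewrite selfadjointE => hM.
have [P Pu [D D_real XE]] := selfadjoint_spectral hX.
set N := P *m M *m P ^t*.
have N_real i : N i i \is Num.real.
  have hN : N ^t* = N by rewrite !trmxC_mul trmxCK hM mulmxA.
  by rewrite CrealE; apply/eqP; rewrite -{2}hN !mxE.
have D_le1 i : `|D 0 i| <= 1.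
  have [v v_neq0] := unitary_conj_diag_eigenvector D i Pu; rewrite -XE => Xv.
  exact: opnorm_le1_eigenvalue nX Xv v_neq0.
exists (P ^t* *m diag_mx (\row_i (-1) ^+ (0 <= N i i)%R) *m P).
  exact: reflection_unitary_conj_sign.
rewrite XE !mxtrace_conj_diag_mul -/N; apply: ler_sum => i _; rewrite mxE.
have -> : (-1) ^+ (0 <= N i i)%R * N i i = - `|N i i|.
  by case: (real_ge0P (N_real i)); rewrite ?expr0 ?expr1 ?mul1r ?mulN1r ?opprK.
apply: real_lerNnormlW; first by rewrite realM // (mxOverP D_real).
by rewrite normrM ler_piMl.
Qed.

End Spectral.

Section Werner.
Context {C : numClosedFieldType} {d : nat}.
Implicit Types X Y Z : 'M[C]_d.

Lemma mxtrace_tens m n (A : 'M[C]_m) (B : 'M[C]_n) : \tr (A *t B) = \tr A * \tr B.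
Proof. by rewrite /mxtrace mulr_sum; apply: eq_bigr => k _; rewrite mxE. Qed.

Lemma sum_mxtens_index m n (F : 'I_(m * n) -> C) :
  \sum_k F k = \sum_i \sum_j F (mxtens_index (i, j)).
Proof.
rewrite pair_big (reindex (@mxtens_index m n)) /=; first by apply: eq_bigr => -[].
by exists (@mxtens_unindex m n) => k; rewrite (mxtens_indexK, mxtens_unindexK).
Qed.

Lemma flipmx_mulmx m (A : 'M[C]_(d * d, m)) i j l :
  (flipmx d *m A) (mxtens_index (i, j)) l = A (mxtens_index (j, i)) l.
Proof.
rewrite mxE (bigD1 (mxtens_index (j, i))) //= big1 ?addr0.
  by rewrite mxE !mxtens_indexK /= !eqxx mul1r.
move=> k; case: (mxtens_indexP k) => a b.
rewrite (inj_eq (can_inj (@mxtens_indexK d d))) xpair_eqE mxE !mxtens_indexK /=.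
by rewrite andbC (eq_sym i) (eq_sym j) => /negbTE->; rewrite mul0r.
Qed.

Lemma mxtrace_flip_tens X Y : \tr (flipmx d *m (X *t Y)) = \tr (X *m Y).
Proof.
rewrite /mxtrace sum_mxtens_index exchange_big; apply: eq_bigr => j _.
by rewrite mxE; apply: eq_bigr => i _; rewrite flipmx_mulmx tensmxE.
Qed.

Definition werner_corr X Y : C :=
  (d + 1)%:R / d%:R ^+ 3 * (\tr X * \tr Y) - \tr (X *m Y) / d%:R ^+ 2.

Lemma mxtrace_werner_tens X Y : \tr (werner d *m (X *t Y)) = werner_corr X Y.
Proof.
rewrite /werner mulmxBl -!scalemxAl mul1mx raddfB /= !linearZ /=.
by rewrite mxtrace_tens mxtrace_flip_tens /werner_corr [_ * \tr (X *m Y)]mulrC.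
Qed.

Lemma werner_corrC X Y : werner_corr X Y = werner_corr Y X.
Proof. by rewrite /werner_corr mxtrace_mulC [\tr Y * _]mulrC. Qed.

Lemma werner_corrN X Y : werner_corr X (- Y) = - werner_corr X Y.
Proof. by rewrite /werner_corr mulmxN !raddfN; ring. Qed.

Lemma werner_coef_ge0 : 0 <= (d + 1)%:R / d%:R ^+ 3 :> C.
Proof. by rewrite divr_ge0 ?exprn_ge0. Qed.

Lemma werner_corr_real X Y : selfadjoint X -> selfadjoint Y ->
  werner_corr X Y \is Num.real.
Proof.
move=> hX hY; apply: realB; apply: realM.
- by rewrite ger0_real ?werner_coef_ge0.
- by apply: realM; exact: selfadjoint_mxtrace_real.
- exact: selfadjoint_mxtrace_mul_real.
- by rewrite ger0_real // invr_ge0 exprn_ge0.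
Qed.

(* The partial trace [tr_2 (werner d * (1 (x) Y))], so that
   [werner_corr X Y = tr (X * werner_ptrace Y)]. *)
Definition werner_ptrace Y : 'M[C]_d :=
  ((d + 1)%:R / d%:R ^+ 3 * \tr Y)%:M - (d%:R ^+ 2)^-1 *: Y.

Lemma werner_corrE X Y : werner_corr X Y = \tr (X *m werner_ptrace Y).
Proof.
rewrite /werner_ptrace mulmxBr mul_mx_scalar -scalemxAr raddfB /= !linearZ /=.
by rewrite /werner_corr; ring.
Qed.

Lemma selfadjoint_werner_ptrace Y : selfadjoint Y -> selfadjoint (werner_ptrace Y).
Proof.
move=> hY; apply: selfadjointD; last first.
  by apply/selfadjointN/selfadjointZ => //; rewrite ger0_real // invr_ge0 exprn_ge0.
apply/selfadjoint_scalar/realM; last exact: selfadjoint_mxtrace_real.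
by rewrite ger0_real ?werner_coef_ge0.
Qed.

Lemma werner_corr_ge X Y (b : C) : \tr (X *m Y) <= b ->
  (d + 1)%:R / d%:R ^+ 3 * (\tr X * \tr Y) - b / d%:R ^+ 2 <= werner_corr X Y.
Proof.
by move=> le_b; rewrite lerD2l lerN2; apply: ler_wpM2r; rewrite ?invr_ge0 ?exprn_ge0.
Qed.

Definition bell_sum X Y Z := werner_corr X Y + werner_corr Y Z + werner_corr Z X.

Lemma bell_sum_rot X Y Z : bell_sum X Y Z = bell_sum Y Z X.
Proof. by rewrite /bell_sum [in RHS]addrC [in RHS]addrA. Qed.

Lemma bell_sum_reflection X Y Z : selfadjoint X -> opnorm_le1 X ->
  selfadjoint Y -> selfadjoint Z ->
  exists2 R, reflection R & bell_sum R Y Z <= bell_sum X Y Z.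
Proof.
move=> hX nX hY hZ.
have [R rR le_R] := contraction_reflection_mxtrace_le hX nX
  (selfadjointD (selfadjoint_werner_ptrace hY) (selfadjoint_werner_ptrace hZ)).
have E W : bell_sum W Y Z =
    \tr (W *m (werner_ptrace Y + werner_ptrace Z)) + werner_corr Y Z.
  by rewrite /bell_sum (werner_corrC Z) mulmxDr mxtraceD -!werner_corrE; ring.
by exists R => //; rewrite !E lerD2r.
Qed.

Lemma bell_reflection X Y Z : (3 <= d)%N ->
  reflection X -> reflection Y -> reflection Z -> -1 <= bell_sum X Y Z.
Proof.
move=> d_ge3 rX rY rZ.
have [p p_le trX] := reflection_mxtrace rX.
have [q q_le trY] := reflection_mxtrace rY.
have [r r_le trZ] := reflection_mxtrace rZ.
have pair_ge U V u v : reflection U -> reflection V ->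
    \tr U = d%:R - 2 * u%:R -> \tr V = d%:R - 2 * v%:R ->
    (d + 1)%:R / d%:R ^+ 3 * ((d%:R - 2 * u%:R) * (d%:R - 2 * v%:R))
    - (d%:R - 2 * u%:R - 2 * v%:R + 4 * (minn u v)%:R) / d%:R ^+ 2
    <= werner_corr U V.
  move=> rU rV trU trV.
  by have := werner_corr_ge (reflection_mxtrace_mul_le_min rU rV trU trV); rewrite trU trV.
apply: le_trans (lerD (lerD (pair_ge _ _ _ _ rX rY trX trY)
  (pair_ge _ _ _ _ rY rZ trY trZ)) (pair_ge _ _ _ _ rZ rX trZ trX)).
have d_neq0 : (d%:R : C) != 0 by rewrite pnatr_eq0 -lt0n (leq_trans _ d_ge3).
rewrite -subr_ge0 (_ : _ - -1 = 4 * bell_poly d p q r / d%:R ^+ 3).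
  by rewrite divr_ge0 ?mulr_ge0 ?bell_poly_ge0 ?exprn_ge0.
by rewrite /bell_poly !natrD !natrM; field.
Qed.

Lemma bell_contraction X Y Z : (3 <= d)%N ->
  selfadjoint X -> selfadjoint Y -> selfadjoint Z ->
  opnorm_le1 X -> opnorm_le1 Y -> opnorm_le1 Z -> -1 <= bell_sum X Y Z.
Proof.
move=> d_ge3 hX hY hZ nX nY nZ.
have [R1 rR1 le1] := bell_sum_reflection hX nX hY hZ.
have [R2 rR2 le2] := bell_sum_reflection hY nY hZ rR1.1.
have [R3 rR3 le3] := bell_sum_reflection hZ nZ rR1.1 rR2.1.
apply: le_trans (bell_reflection d_ge3 rR3 rR1 rR2) _; apply: le_trans le3 _.
rewrite -bell_sum_rot; apply: le_trans le2 _.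
by rewrite -bell_sum_rot.
Qed.

Lemma werner_corr_sub_le X Y Z : (3 <= d)%N ->
  selfadjoint X -> selfadjoint Y -> selfadjoint Z ->
  opnorm_le1 X -> opnorm_le1 Y -> opnorm_le1 Z ->
  werner_corr X Z - werner_corr X Y <= 1 - werner_corr Y Z.
Proof.
move=> d_ge3 hX hY hZ nX nY nZ.
have := bell_contraction d_ge3 hX hY (selfadjointN hZ) nX nY (opnorm_le1N nZ).
rewrite /bell_sum werner_corrN (werner_corrC (- Z)) werner_corrN => bell.
rewrite -subr_ge0 (_ : _ - _ = werner_corr X Y - werner_corr Y Z - werner_corr X Z - -1).
  by rewrite subr_ge0.
by ring.
Qed.

End Werner.

Theorem mainTheorem2 (C : numClosedFieldType) (d : nat) (hd : (3 <= d)%N)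
  (Ja Jb1 Jb2 : 'M[C]_d)
  (hJa : selfadjoint Ja) (hJb1 : selfadjoint Jb1) (hJb2 : selfadjoint Jb2)
  (nJa : opnorm_le1 Ja) (nJb1 : opnorm_le1 Jb1) (nJb2 : opnorm_le1 Jb2) :
  `| \tr (werner d *m (Ja *t Jb1)) - \tr (werner d *m (Ja *t Jb2)) |
    <= 1 - \tr (werner d *m (Jb1 *t Jb2)).
Proof.
rewrite !mxtrace_werner_tens real_ler_norml; last by apply: realB; exact: werner_corr_real.
rewrite lerNl opprB; apply/andP; split; first exact: werner_corr_sub_le.
by rewrite (werner_corrC Jb1); exact: werner_corr_sub_le.
Qed.
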